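(* Let $h_1,h_2,\dots$ be real-valued i.i.d. random variables, and for $N\in\mathbb N$ set $\delta_N=\mathbb E(h_1\mathbf 1_{\{|h_1|\le N\}})$ and $\sigma_N=\frac1N\mathbb E(h_1^2\mathbf 1_{\{|h_1|\le N\}})$. For every $\eta>0$ there exists $N_\eta\in\mathbb N$ such that $\delta_N^2\le\eta N(1+\sigma_N)$ for all $N\ge N_\eta$. *)

From HB Require Import structures.
From mathcomp Require Import all_boot all_order all_algebra.
From mathcomp Require Import all_classical all_reals all_analysis.
Set Implicit Arguments. Unset Strict Implicit. Unset Printing Implicit Defensive.
Import Order.TTheory GRing.Theory Num.Theory.
Local Open Scope classical_set_scope.
Local Open Scope ring_scope.

Definition mutually_independent d (T : measurableType d) (R : realType)
  (P : probability T R) (h : nat -> {RV P >-> R}) : Prop :=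
  forall (S : seq nat) (B : nat -> set R),
    uniq S -> (forall i, measurable (B i)) ->
    P (\bigcap_(i in [set` S]) (h i @^-1` B i)) =
    (\prod_(i <- S) P (h i @^-1` B i))%E.

Definition identically_distributed d (T : measurableType d) (R : realType)
  (P : probability T R) (h : nat -> {RV P >-> R}) : Prop :=
  forall i (A : set R), measurable A ->
    distribution P (h i) A = distribution P (h 0%N) A.

Definition iid d (T : measurableType d) (R : realType)
  (P : probability T R) (h : nat -> {RV P >-> R}) : Prop :=
  mutually_independent h /\ identically_distributed h.

(* delta_N = E(X 1_{|X| <= N}) (a finite real: the integrand is bounded). *)
Definition trunc_mean d (T : measurableType d) (R : realType)
  (P : probability T R) (X : T -> R) (N : nat) : R :=
  fine (expectation P (fun w => X w * (if `|X w| <= N%:R then 1 else 0))).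

Definition trunc_sigma d (T : measurableType d) (R : realType)
  (P : probability T R) (X : T -> R) (N : nat) : R :=
  (N%:R)^-1 * fine (expectation P (fun w => X w ^+ 2 * (if `|X w| <= N%:R then 1 else 0))).

From HB Require Import structures.
From mathcomp Require Import all_boot all_order all_algebra.
From mathcomp Require Import all_classical all_reals all_analysis.
From mathcomp Require Import measurable_realfun ring lra.
Set Implicit Arguments.
Unset Strict Implicit.
Unset Printing Implicit Defensive.
Import Order.TTheory GRing.Theory Num.Theory.
Local Open Scope ring_scope.

(* Write a := h_0 * 1_{|h_0| <= N}, so that delta_N = E a and N sigma_N = E a^2.
   For a cutoff M >= 0 and any t >= 0, pointwise
     2 t |a| <= 2 t M + a^2 + t^2 1_{|a| > M}
   (trivial when |a| <= M, AM-GM otherwise), hence after integration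
     2 t |delta_N| <= 2 t M + N sigma_N + t^2 P(|h_0| > M).
   If P(|h_0| > M) <= e, the choice t = |delta_N| / e yields
   delta_N^2 <= 4 M^2 + 2 e N sigma_N.  With e = eta / 2 and M chosen by the
   vanishing of the tail of h_0, the claim holds once 4 M^2 <= eta N. *)

Lemma AMGM_cutoff (R : realDomainType) (a t M : R) : 0 <= t -> 0 <= M ->
  2 * t * `|a| <= 2 * t * M + a ^+ 2 + t ^+ 2 * (M < `|a|)%R%:R.
Proof.
move=> t0 M0; have a2 : a ^+ 2 = `|a| ^+ 2 by rewrite real_normK ?num_real.
have AMGM := sqr_ge0 (`|a| - t).
case: ltP => [_|aM]; last by rewrite mulr0 addr0 -mulrA; nra.
by rewrite mulr1; nra.
Qed.

Lemma sqr_le_of_quadratic_bound (R : realFieldType) (b M s eps e : R) :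
  0 <= b -> 0 < e -> eps <= e ->
  (forall t, 0 <= t -> 2 * t * b <= 2 * t * M + s + t ^+ 2 * eps) ->
  b ^+ 2 <= 4 * M ^+ 2 + 2 * e * s.
Proof.
move=> b0 e0 eps_e bound; set t := b / e.
have te : t * e = b by rewrite divfK // gt_eqF.
have /bound bound_t : 0 <= t by rewrite divr_ge0 // ltW.
have {}bound_t : 2 * t * b <= 2 * t * M + s + t ^+ 2 * e.
  by apply: le_trans bound_t _; rewrite lerD2l ler_wpM2l ?sqr_ge0.
have : 2 * b ^+ 2 <= 2 * b * M + e * s + b ^+ 2.
  have -> : 2 * b ^+ 2 = 2 * t * b * e by rewrite -te; ring.
  have -> : 2 * b * M + e * s + b ^+ 2 = (2 * t * M + s + t ^+ 2 * e) * e.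
    by rewrite -te; ring.
  by rewrite ler_wpM2r // ltW.
have := sqr_ge0 (b - 2 * M).
nra.
Qed.

Section truncated_moments.
Context d (T : measurableType d) (R : realType) (P : probability T R).
Local Open Scope classical_set_scope.

Lemma measurable_norm_gt (f : T -> R) (M : R) :
  measurable_fun setT f -> measurable [set x | M < `|f x|].
Proof.
move=> mf; rewrite -[X in measurable X]setTI.
have mnf : measurable_fun setT (fun x => `|f x|) by exact: measurableT_comp.
exact: (measurable_fun_ltr (measurable_cst M) mnf measurableT (Y := [set true])).
Qed.

Lemma ge0_expectationD (f g : T -> R) :
  measurable_fun setT f -> measurable_fun setT g ->
  (forall x, 0 <= f x) -> (forall x, 0 <= g x) ->
  expectation P (fun x => f x + g x) = (expectation P f + expectation P g)%E.
Proof.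
move=> mf mg f0 g0; rewrite unlock -ge0_integralD //.
- by move=> x _; rewrite lee_fin.
- exact/measurable_EFinP.
- by move=> x _; rewrite lee_fin.
- exact/measurable_EFinP.
Qed.

Lemma ge0_expectationZl (k : R) (f : T -> R) :
  measurable_fun setT f -> 0 <= k -> (forall x, 0 <= f x) ->
  expectation P (fun x => k * f x) = (k%:E * expectation P f)%E.
Proof.
move=> mf k0 f0; rewrite unlock -ge0_integralZl_EFin //.
- by move=> x _; rewrite lee_fin.
- exact/measurable_EFinP.
Qed.

Lemma expectation_AMGM_cutoff (f : T -> R) (M t : R) :
  measurable_fun setT f -> 0 <= M -> 0 <= t ->
  ((2 * t)%:E * `|expectation P f|
     <= (2 * t * M)%:E + expectation P (fun x => f x ^+ 2)%R
        + (t ^+ 2)%:E * P [set x | (M < `|f x|)%R])%E.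
Proof.
move=> mf M0 t0; set A := [set x | M < `|f x|].
have mA : measurable A by exact: measurable_norm_gt.
have m1A : measurable_fun setT (\1_A : T -> R) by exact: measurable_indic.
have mf2 : measurable_fun setT (fun x => f x ^+ 2) by exact: measurable_funX.
have mnf : measurable_fun setT (fun x => `|f x|) by exact: measurableT_comp.
have t20 : 0 <= t ^+ 2 by exact: sqr_ge0.
have f20 x : 0 <= f x ^+ 2 by exact: sqr_ge0.
have tM0 : 0 <= 2 * t * M by rewrite !mulr_ge0.
have tt0 : 0 <= 2 * t by rewrite mulr_ge0.
have abs_le : (`|expectation P f| <= expectation P (fun x => `|f x|)%R)%E.
  rewrite unlock; apply: le_trans (le_abse_integral _ _ _) _ => //.
  exact/measurable_EFinP.
have -> : ((2 * t * M)%:E + expectation P (fun x => f x ^+ 2)%R + (t ^+ 2)%:E * P A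
    = expectation P (fun x => 2 * t * M + f x ^+ 2 + t ^+ 2 * \1_A x)%R)%E.
  rewrite ge0_expectationD ?ge0_expectationD ?ge0_expectationZl //.
  - by rewrite expectation_cst expectation_indic // -EFinM.
  - exact: measurable_funD.
  - exact: measurable_funM.
  - by move=> x; rewrite addr_ge0.
  - by move=> x; rewrite mulr_ge0.
apply: le_trans (lee_wpmul2l _ abs_le) _; first by rewrite lee_fin.
rewrite -ge0_expectationZl //; apply: expectation_le.
- exact: measurable_funM.
- by apply: measurable_funD; [exact: measurable_funD | exact: measurable_funM].
- by move=> x; rewrite mulr_ge0.
- by move=> x; rewrite !addr_ge0 ?f20 // mulr_ge0.
- by apply: aeW => x; rewrite indicE mem_setE; exact: AMGM_cutoff.
Qed.

Lemma cvg_prob_norm_gtn (f : T -> R) : measurable_fun setT f ->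
  P [set x | n%:R < `|f x|] @[n --> \oo] --> 0%E.
Proof.
move=> mf; pose F n := [set x | (n%:R : R) < `|f x|].
have mF n : measurable (F n) by exact: measurable_norm_gt.
have capF : \bigcap_n F n = set0.
  apply/seteqP; split => // x Fx.
  have := Fx (Num.truncn `|f x|).+1 I.
  by rewrite /F /= ltNge (ltW (truncnS_gt _)).
rewrite -(measure0 P) -capF; apply: nonincreasing_cvg_mu => //.
- by rewrite (le_lt_trans (probability_le1 P (mF 0%N))) ?ltry.
- by rewrite capF.
- move=> n m nm; apply/subsetPset => x; rewrite /F /=.
  by apply: le_lt_trans; rewrite ler_nat.
Qed.

Lemma bounded_Lfun1 (f : T -> R) (C : R) :
  measurable_fun setT f -> (forall x, `|f x| <= C) -> f \in Lfun P 1%E.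
Proof.
move=> mf fC; apply/Lfun1_integrable/measurable_bounded_integrable => //.
  by rewrite /= probability_setT ltry.
rewrite /bounded_near; near=> K => x _ /=; apply: le_trans (fC x) _.
by near: K; apply: nbhs_pinfty_ge; exact: num_real.
Unshelve. all: by end_near.
Qed.

Lemma fine_expectation_AMGM_cutoff (f : T -> R) (C M t : R) :
  measurable_fun setT f -> (forall x, `|f x| <= C) -> 0 <= M -> 0 <= t ->
  2 * t * `|fine (expectation P f)|
    <= 2 * t * M + fine (expectation P (fun x => f x ^+ 2))
       + t ^+ 2 * fine (P [set x | M < `|f x|]).
Proof.
move=> mf fC M0 t0.
have Ef_fin : expectation P f \is a fin_num.
  exact: expectation_fin_num (bounded_Lfun1 mf fC).
have Ef2_fin : expectation P (fun x => f x ^+ 2) \is a fin_num.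
  apply: expectation_fin_num (@bounded_Lfun1 _ (C ^+ 2) _ _).
    exact: measurable_funX.
  by move=> x; rewrite normrX lerXn2r ?nnegrE // (le_trans _ (fC x)).
have PA_fin : P [set x | M < `|f x|] \is a fin_num.
  by rewrite fin_num_measure //; exact: measurable_norm_gt.
have := expectation_AMGM_cutoff mf M0 t0.
by rewrite -[X in `|X|%E]fineK // -[X in (_ + X + _)%E]fineK // -[P _]fineK.
Qed.

Lemma trunc_mean_sqr_le (X : T -> R) (N : nat) (M e : R) :
  measurable_fun setT X -> (0 < N)%N -> 0 <= M -> 0 < e ->
  fine (P [set x | M < `|X x|]) <= e ->
  trunc_mean P X N ^+ 2 <= 4 * M ^+ 2 + 2 * e * (N%:R * trunc_sigma P X N).
Proof.
move=> mX N0 M0 e0 tailX; rewrite /trunc_mean /trunc_sigma.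
set a := fun x => X x * (if `|X x| <= N%:R then 1 else 0).
have ma : measurable_fun setT a.
  apply: measurable_funM => //; apply: measurable_fun_ifT => //.
  by apply: measurable_fun_ler => //; exact: measurableT_comp.
have a_le_N x : `|a x| <= N%:R.
  by rewrite /a; case: ifP => [XN|_]; rewrite ?mulr1 ?mulr0 ?normr0.
have -> : (fun x => X x ^+ 2 * (if `|X x| <= N%:R then 1 else 0))
          = (fun x => a x ^+ 2).
  by apply/funext => x; rewrite /a; case: ifP; rewrite ?mulr1 ?mulr0 ?expr0n.
have tail_a : fine (P [set x | M < `|a x|]) <= e.
  have mAa := measurable_norm_gt M ma; have mAX := measurable_norm_gt M mX.
  apply: le_trans tailX; rewrite fine_le ?fin_num_measure //.
  apply: le_measure; rewrite ?inE // => x /=.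
  move/lt_le_trans; apply; rewrite /a normrM.
  by case: ifP; rewrite ?normr1 ?normr0 ?mulr1 ?mulr0.
rewrite mulVKf; last by rewrite pnatr_eq0 -lt0n.
rewrite -(real_normK (num_real _)).
apply: sqr_le_of_quadratic_bound (normr_ge0 _) e0 tail_a _ => t t0.
exact: fine_expectation_AMGM_cutoff ma a_le_N M0 t0.
Qed.

End truncated_moments.

Theorem lemma7p1 (d : measure_display) (T : measurableType d) (R : realType)
  (P : probability T R) (h : nat -> {RV P >-> R}) :
  iid h ->
  forall eta : R, 0 < eta ->
  exists Neta : nat, forall N : nat, (Neta <= N)%N ->
    trunc_mean P (h 0%N) N ^+ 2 <= eta * N%:R * (1 + trunc_sigma P (h 0%N) N).
Proof.
move=> _ eta eta0.
have mX : measurable_fun setT (h 0%N : T -> R) by exact: measurable_funPT.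
have eta2 : 0 < eta / 2 by rewrite divr_gt0.
have [n tail_n] := filter_ex (cvgr_le _ (fine_cvg (cvg_prob_norm_gtn P mX)) _ eta2).
exists (Num.truncn (4 * n%:R ^+ 2 / eta)).+1 => N leN.
have N0 : (0 < N)%N by apply: leq_trans leN.
have large_N : 4 * n%:R ^+ 2 <= eta * N%:R.
  rewrite -ler_pdivrMl // mulrC; apply/ltW/(lt_le_trans (truncnS_gt _)).
  by rewrite ler_nat.
apply: le_trans (trunc_mean_sqr_le mX N0 (ler0n _ n) eta2 tail_n) _.
have -> : 2 * (eta / 2) = eta by rewrite mulrC divfK ?pnatr_eq0.
by rewrite mulrDr mulr1 mulrA lerD2r.
Qed.
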